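(* Assume the standing hypothesis (H) below. Then for every $K>0$ there exists a constant $C_K>0$ such that for all $w_1,w_2\in W$ with $\max\{|w_1|_W,|w_2|_W\}\le K$, $$d_H(Z(w_1),Z(w_2))\le C_K|w_1-w_2|_W,$$ where $d_H(A,B)=\max\{\sup_{z\in A}\mathrm{dist}(z,B),\sup_{z'\in B}\mathrm{dist}(z',A)\}$ is the Hausdorff distance.
   Context: $X$ is a real Hilbert space with inner product $\langle\cdot,\cdot\rangle$ and norm $|x|=\sqrt{\langle x,x\rangle}$; $W$ is a real Banach space with norm $|\cdot|_W$. $G:X\times W\to[0,\infty)$ is locally Lipschitz continuous and $Z(w):=\{x\in X: G(x,w)\le 1\}$; $\partial Z(w)$ is its boundary and $\mathrm{dist}(x,S)=\inf_{s\in S}|x-s|$. The partial gradient $\nabla_xG(x,w)\in X$ is defined by $\langle\nabla_xG(x,w),y\rangle=\lim_{t\to0}\frac1t(G(x+ty,w)-G(x,w))$ for all $y\in X$. Hypothesis (H): $\nabla_xG(x,w)$ exists for all $x\in X$, $w\in W$, and there are positive constants $\lambda,c,L$ and functions $\mu_1:W\times[0,\infty)\to[0,\infty)$, $\mu_2:[0,\infty)\to[0,\infty)$ with $\mu_1(w,0)=\mu_2(0)=0$, $\lim_{s\to\infty}\mu_1(w,s)=\lim_{s\to\infty}\mu_2(s)=\infty$ for every $w$, such that for all $x,y,z\in X$, $w,w'\in W$: (i) $G(x,w)=1\Rightarrow|\nabla_xG(x,w)|\ge c$; (ii) $|\nabla_xG(x,w)-\nabla_xG(y,w)|\le\mu_1(w,|x-y|)$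 if $x,y\in Z(w)$; (iii) $\langle\nabla_xG(x,w)-\nabla_xG(z,w),x-z\rangle\ge-\lambda|x-z|^2$ if $x\in\partial Z(w)$, $z\in Z(w)$; (iv) $|G(x,w)-G(x,w')|\le L|w-w'|_W$; (v) for every $\rho>0$, $\mathrm{dist}(x,Z(w))\ge\rho\Rightarrow G(x,w)-1\ge\mu_2(\rho)$. *)

From HB Require Import structures.
From mathcomp Require Import all_boot all_order all_algebra.
From mathcomp Require Import all_classical all_reals all_analysis.
Set Implicit Arguments. Unset Strict Implicit. Unset Printing Implicit Defensive.
Import Order.TTheory GRing.Theory Num.Theory.
Import numFieldNormedType.Exports.
Local Open Scope classical_set_scope.
Local Open Scope ring_scope.

(* ip is an inner product on the normed space X inducing its norm:
   symmetric, linear in the first argument, and <x,x> = |x|^2.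
   Together with completeness of X this makes X a real Hilbert space. *)
Definition is_inner_product (R : realType) (X : normedModType R)
  (ip : X -> X -> R) : Prop :=
  [/\ (forall x y, ip x y = ip y x),
      (forall (a : R) x y z, ip (a *: x + y) z = a * ip x z + ip y z)
    & (forall x, ip x x = `|x| ^+ 2)].

(* dist(x, S) = inf_{s in S} |x - s|  (= +oo when S is empty) *)
Definition dist (R : realType) (X : normedModType R) (x : X) (S : set X)
  : \bar R := ereal_inf [set (`|x - s|)%:E | s in S].

Definition hausdorff_dist (R : realType) (X : normedModType R) (A B : set X)
  : \bar R :=
  Order.max (ereal_sup [set dist z B | z in A])
            (ereal_sup [set dist z A | z in B]).

Definition boundary (R : realType) (X : normedModType R) (A : set X) : set X :=
  closure A `\` interior A.

Definition is_partial_grad (R : realType) (X W : normedModType R)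
  (ip : X -> X -> R) (G : X -> W -> R) (x : X) (w : W) (g : X) : Prop :=
  forall y : X,
    (fun t : R => t^-1 * (G (x + t *: y) w - G x w)) @ 0^' --> ip g y.

Definition locally_lipschitz2 (R : realType) (X W : normedModType R)
  (G : X -> W -> R) : Prop :=
  forall (x0 : X) (w0 : W), exists r : R, exists M : R, 0 < r /\
    forall x1 x2 w1 w2, `|x1 - x0| < r -> `|x2 - x0| < r ->
      `|w1 - w0| < r -> `|w2 - w0| < r ->
      `|G x1 w1 - G x2 w2| <= M * (`|x1 - x2| + `|w1 - w2|).

From HB Require Import structures.
From mathcomp Require Import all_boot all_order all_algebra.
From mathcomp Require Import all_classical all_reals all_analysis.
From mathcomp Require Import ring lra.
Import Order.TTheory GRing.Theory Num.Theory.
Import numFieldNormedType.Exports.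
Local Open Scope classical_set_scope.
Local Open Scope ring_scope.

(** Fix z in Z(w1) and move the parameter along the segment
    w(t) = w1 + t (w2 - w1), t in [0,1], transporting z along.  By (iv), G
    increases along the segment at rate at most L |w2 - w1|; while G < 1 the
    point can stay put, and on the boundary G = 1 it moves with speed
    k = 2 L |w2 - w1| / c along the normalized negative gradient, where (i)
    makes G decrease at rate at least c k / 2 = L |w2 - w1|.  A continuation
    argument in the complete space X (a Brezis-Browder ordering principle for
    pairs (t, y) ordered by |y' - y| <= k (t' - t)) produces a point of Z(w2)
    within distance k of z.  Only (i) and (iv) are needed, and C_K = 2 L / c
    does not depend on K. *)

Lemma cauchy_seq_cvg {R : realType} {X : completeNormedModType R} (y : nat -> X) :
  (forall e, 0 < e -> exists N, forall n, (N <= n)%N -> `|y n - y N| < e) ->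
  exists l : X, y n @[n --> \oo] --> l.
Proof.
move=> y_cauchy; apply/cvg_ex; apply: cauchy_cvg; apply: cauchy_exP => e e_gt0.
have [N HN] := y_cauchy e e_gt0; exists (y N), N => // n /= Nn.
by rewrite -ball_normE /ball_ /= distrC; apply: HN.
Qed.

Section LipschitzChains.
Context {R : realType} {X : completeNormedModType R}.
Variable k : R.
Hypothesis k_ge0 : 0 <= k.

Definition lip_le (p q : R * X) := p.1 <= q.1 /\ `|q.2 - p.2| <= k * (q.1 - p.1).

Lemma lip_le_refl p : lip_le p p.
Proof. by split; rewrite // !subrr normr0 mulr0. Qed.

Lemma lip_le_trans {p q r : R * X} : lip_le p q -> lip_le q r -> lip_le p r.
Proof.
move=> [pq1 pq2] [qr1 qr2]; split; first exact: le_trans pq1 qr1.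
rewrite -(subrKA q.2) -(subrKA q.1) mulrDr.
by apply: le_trans (ler_normD _ _) _; apply: lerD.
Qed.

Lemma lip_le_chain {p : nat -> R * X} :
  (forall n, lip_le (p n) (p n.+1)) -> forall n m, (n <= m)%N -> lip_le (p n) (p m).
Proof.
move=> p_incr n m /subnKC <-; elim: (m - n)%N => [|d IH].
  by rewrite addn0; apply: lip_le_refl.
by rewrite addnS; apply: lip_le_trans IH (p_incr _).
Qed.

Lemma lip_chain_limit {p : nat -> R * X} {b : R} :
  (forall n, lip_le (p n) (p n.+1)) -> (forall n, (p n).1 <= b) ->
  exists2 q : R * X, q.1 <= b /\ forall n, lip_le (p n) q &
    forall e, 0 < e -> exists N, forall n, (N <= n)%N ->
      q.1 - e < (p n).1 /\ `|q.2 - (p n).2| < e.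
Proof.
move=> p_incr p_le_b; have p_mono := lip_le_chain p_incr.
have has_sup_t : has_sup (range (fun n => (p n).1)).
  by split; [exists (p 0%N).1, 0%N | exists b => _ [n _ <-]].
pose T := sup (range (fun n => (p n).1)).
have le_T n : (p n).1 <= T by apply: sup_upper_bound => //; exists n.
have near_T e : 0 < e -> exists N, forall n, (N <= n)%N -> T - e < (p n).1.
  move=> e_gt0; have [_ [N _ <-] hN] := sup_adherent e_gt0 has_sup_t.
  by exists N => n Nn; apply: lt_le_trans hN _; case: (p_mono _ _ Nn).
have [Y cvgY] : exists Y : X, (p n).2 @[n --> \oo] --> Y.
  apply: cauchy_seq_cvg => e e_gt0.
  have k1_gt0 : 0 < k + 1 by rewrite ltr_wpDl.
  pose a := e / (k + 1); have a_gt0 : 0 < a by rewrite divr_gt0.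
  have [N HN] := near_T a a_gt0; exists N => n Nn.
  have [_ hn] := p_mono _ _ Nn; apply: le_lt_trans hn _.
  have <- : (k + 1) * a = e by rewrite mulrC divfK ?gt_eqF.
  apply: le_lt_trans (_ : k * a < _); last by rewrite mulrDl mul1r ltrDl.
  by apply: ler_wpM2l => //; have := HN N (leqnn N); have := le_T n; lra.
have near_Y e : 0 < e -> exists N, forall n, (N <= n)%N -> `|Y - (p n).2| < e.
  by move=> e_gt0; have [N _ HN] := (cvgrPdist_lt _ _).1 cvgY e e_gt0; exists N.
exists (T, Y).
  split=> [|n]; first by apply: ge_sup => [|_ [n _ <-]]; [exists (p 0%N).1, 0%N|].
  split=> //=; apply/ler_addgt0Pr => e e_gt0; have [N HN] := near_Y e e_gt0.
  have [_ hj] := p_mono n (maxn n N) (leq_maxl _ _).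
  have hY := HN _ (leq_maxr n N); have := le_T (maxn n N).
  rewrite -(subrKA (p (maxn n N)).2); move: hj hY.
  move: (p (maxn n N)) => q hj hY hq.
  have hk : k * (q.1 - (p n).1) <= k * (T - (p n).1) by apply: ler_wpM2l => //; lra.
  by apply: le_trans (ler_normD _ _) _; lra.
move=> e e_gt0; have [N1 H1] := near_T e e_gt0; have [N2 H2] := near_Y e e_gt0.
exists (maxn N1 N2) => n; rewrite geq_max => /andP[n1 n2].
by split; [apply: H1 | apply: H2].
Qed.

Variable P : R -> X -> Prop.

Definition admissible (p : R * X) := [/\ 0 <= p.1, p.1 <= 1 & P p.1 p.2].

Lemma lip_le_halfway {p : R * X} : admissible p -> exists q, [/\ admissible q, lip_le p q &
  forall r, admissible r -> lip_le p r -> r.1 <= 2 * q.1 - p.1].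
Proof.
move=> p_adm; pose S := [set r.1 | r in [set r | admissible r /\ lip_le p r]].
have has_sup_S : has_sup S.
  split; first by exists p.1, p; split=> //; apply: lip_le_refl.
  by exists 1 => _ [r [[_ ? _] _] <-].
have le_sup r : admissible r -> lip_le p r -> r.1 <= sup S.
  by move=> r_adm pr; apply: sup_upper_bound => //; exists r.
have [p_lt|sup_le] := ltrP p.1 (sup S); last first.
  exists p; split=> //; first exact: lip_le_refl.
  by move=> r r_adm pr; have := le_sup r r_adm pr; lra.
have e_gt0 : 0 < (sup S - p.1) / 2 by rewrite divr_gt0 // subr_gt0.
have [_ [q [q_adm pq] <-] hq] := sup_adherent e_gt0 has_sup_S.
exists q; split=> // r r_adm pr; have := le_sup r r_adm pr; lra.
Qed.

Hypothesis P_left_closed : forall t y,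
  (forall e, 0 < e -> exists t' y', [/\ t - e < t', t' <= t, `|y - y'| < e & P t' y']) ->
  P t y.

(* The Brezis-Browder ordering principle for lip_le. *)
Lemma lip_le_maximal {p : R * X} : admissible p -> exists q, [/\ admissible q, lip_le p q &
  forall r, admissible r -> lip_le q r -> r.1 <= q.1].
Proof.
have next_ex u : exists v, admissible u -> [/\ admissible v, lip_le u v &
    forall r, admissible r -> lip_le u r -> r.1 <= 2 * v.1 - u.1].
  have [/lip_le_halfway[v ?]|] := pselect (admissible u); first by exists v.
  by exists u.
have [next next_spec] := choice next_ex.
move=> p_adm; pose s n := iter n next p.
have s_adm n : admissible (s n).
  by elim: n => // n IH; rewrite /s iterS; case: (next_spec _ IH).
have s_incr n : lip_le (s n) (s n.+1) by rewrite /s iterS; case: (next_spec _ (s_adm n)).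
have s_le1 n : (s n).1 <= 1 by case: (s_adm n).
have [q [q_le1 s_le_q] s_near_q] := lip_chain_limit s_incr s_le1.
have q_adm : admissible q.
  split=> //; first by case: (s_le_q 0%N) (s_adm 0%N) => + _ [] /=; lra.
  apply: P_left_closed => e e_gt0; have [N HN] := s_near_q e e_gt0.
  exists (s N).1, (s N).2; have [? ?] := HN N (leqnn N).
  by split=> //; [case: (s_le_q N) | case: (s_adm N)].
exists q; split=> //; first exact: s_le_q 0%N.
move=> r r_adm qr; apply/ler_addgt0Pr => e e_gt0.
have [N HN] := s_near_q e e_gt0; have [hN _] := HN N (leqnn N).
have [_ _ /(_ r r_adm)] := next_spec _ (s_adm N).
have [s_le _] := s_le_q N.+1; rewrite /s iterS in s_le *.
by move=> /(_ (lip_le_trans (s_le_q N) qr)); lra.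
Qed.

Hypothesis P_step : forall t y, 0 <= t -> t < 1 -> P t y -> exists2 h0, 0 < h0 &
  forall h, 0 < h -> h < h0 -> exists y', P (t + h) y' /\ `|y' - y| <= k * h.

Lemma lip_continuation z : P 0 z -> exists y, P 1 y /\ `|y - z| <= k.
Proof.
move=> Pz; have z_adm : admissible (0, z) by split=> //=; lra.
have [q [[q_ge0 q_le1 Pq] [_ zq] q_max]] := lip_le_maximal z_adm.
suff q1 : q.1 = 1 by exists q.2; rewrite -q1; split=> //; rewrite q1 subr0 mulr1 in zq.
apply/eqP; rewrite eq_le q_le1 leNgt; apply/negP => q_lt1.
have [h0 h0_gt0 step] := P_step _ _ q_ge0 q_lt1 Pq.
pose h := Num.min (h0 / 2) (1 - q.1).
have h_gt0 : 0 < h by rewrite lt_min divr_gt0 //= subr_gt0.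
have h_lt : h < h0 by rewrite gt_min ltr_pdivrMr // ltr_pMr // ltr1n.
have h_le : h <= 1 - q.1 by rewrite ge_min lexx orbT.
have [y' [Py' qy']] := step h h_gt0 h_lt; clearbody h.
have r_adm : admissible (q.1 + h, y') by split=> //=; lra.
have qr : lip_le q (q.1 + h, y') by split=> /=; [rewrite lerDl ltW | rewrite addrAC subrr add0r].
by have /= := q_max _ r_adm qr; lra.
Qed.
End LipschitzChains.

Lemma locally_lipschitz2_continuous {R : realType} {X W : normedModType R}
    {G : X -> W -> R} : locally_lipschitz2 G ->
  forall x w e, 0 < e -> exists2 a, 0 < a &
    forall x' w', `|x' - x| < a -> `|w' - w| < a -> `|G x w - G x' w'| < e.
Proof.
move=> G_loclip x w e e_gt0; have [r [M [r_gt0 G_lip]]] := G_loclip x w.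
have M1_gt0 : 0 < 2 * (`|M| + 1) by rewrite mulr_gt0 // ltr_wpDl.
pose a := Num.min r (e / (2 * (`|M| + 1))).
have a_gt0 : 0 < a by rewrite lt_min r_gt0 divr_gt0.
have a_le_r : a <= r by rewrite ge_min lexx.
have a_le : 2 * (`|M| + 1) * a <= e by rewrite mulrC -ler_pdivlMr // ge_min lexx orbT.
exists a => // x' w' xx' ww'; clearbody a.
have := G_lip x x' w w'; rewrite !subrr !normr0.
move=> /(_ r_gt0 (lt_le_trans xx' a_le_r) r_gt0 (lt_le_trans ww' a_le_r)).
rewrite !(distrC x) !(distrC w); move=> hG; apply: le_lt_trans hG _.
have hM : M * (`|x' - x| + `|w' - w|) <= `|M| * (2 * a).
  apply: le_trans (ler_wpM2r (addr_ge0 _ _) (ler_norm M)) _ => //.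
  by apply: ler_wpM2l => //; lra.
by apply: le_lt_trans hM _; nra.
Qed.

Lemma inner_product_neg_unit {R : realType} {X : normedModType R} {ip : X -> X -> R}
    (g : X) : is_inner_product ip -> ip g (- `|g|^-1 *: g) = - `|g|.
Proof.
case=> ip_sym ip_lin ip_norm.
have ip0 : ip 0 g = 0 by have := ip_lin 1 0 0 g; rewrite scaler0 addr0 mul1r; lra.
rewrite ip_sym -[_ *: g]addr0 ip_lin ip0 addr0 ip_norm.
have [->|g_neq0] := eqVneq g 0; first by rewrite normr0 invr0 !oppr0 mul0r.
by rewrite expr2 mulrA mulNr mulVf ?mulN1r ?normr_eq0.
Qed.

Lemma cvg_at0_lt {R : realType} {f : R -> R} {l z : R} :
  f s @[s --> 0^'] --> l -> l < z ->
  exists2 e, 0 < e & forall s, 0 < s -> s < e -> f s < z.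
Proof.
move=> f_cvg l_lt_z; have := (@nbhs_norm0P _ R _).1 (cvgr_lt _ f_cvg _ l_lt_z).
move=> [e /= e_gt0 He]; exists e => // s s_gt0 s_lt_e.
by apply: He; rewrite ?gt0_norm_eq ?gt_eqF //= ger0_norm ?ltW.
Qed.

Lemma descent_along_neg_gradient {R : realType} {X W : normedModType R}
    {ip : X -> X -> R} {G : X -> W -> R} {x : X} {w : W} {g : X} (a : R) :
  is_inner_product ip -> is_partial_grad ip G x w g -> a < `|g| ->
  exists2 e, 0 < e & forall s, 0 < s -> s < e ->
    G (x + s *: (- `|g|^-1 *: g)) w < G x w - a * s.
Proof.
move=> ip_inner G_grad a_lt.
have [|e e_gt0 He] := cvg_at0_lt (G_grad (- `|g|^-1 *: g)) (_ : _ < - a).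
  by rewrite inner_product_neg_unit // ltrN2.
exists e => // s s_gt0 s_lt_e; have := He s s_gt0 s_lt_e.
by rewrite mulrC ltr_pdivrMr // mulNr; lra.
Qed.

Section SublevelTransport.
Context {R : realType} {X W : completeNormedModType R} {ip : X -> X -> R}
  {G : X -> W -> R} {gradG : X -> W -> X} {c L : R}.
Hypotheses (ip_inner : is_inner_product ip) (G_loclip : locally_lipschitz2 G)
  (G_grad : forall x w, is_partial_grad ip G x w (gradG x w))
  (c_gt0 : 0 < c) (L_gt0 : 0 < L)
  (grad_ge : forall x w, G x w = 1 -> c <= `|gradG x w|)
  (G_lipw : forall x w w', `|G x w - G x w'| <= L * `|w - w'|).

Section Segment.
Variables (w0 d : W).
Hypothesis d_neq0 : d != 0.

Let wt (t : R) := w0 + t *: d.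
Let k := 2 * L / c * `|d|.

Let k_gt0 : 0 < k.
Proof. by rewrite !mulr_gt0 ?invr_gt0 ?normr_gt0. Qed.

Lemma segment_drift t h x : 0 <= h -> G x (wt (t + h)) <= G x (wt t) + L * `|d| * h.
Proof.
move=> h_ge0; have := G_lipw x (wt (t + h)) (wt t).
rewrite /wt opprD addrACA subrr add0r -scalerBl addrAC subrr add0r.
by rewrite normrZ ger0_norm // => /(le_trans (ler_norm _)); lra.
Qed.

Lemma segment_step_interior t y : G y (wt t) < 1 ->
  exists2 h0, 0 < h0 & forall h, 0 < h -> h < h0 -> G y (wt (t + h)) <= 1.
Proof.
move=> G_lt1; have Ld_gt0 : 0 < L * `|d| by rewrite mulr_gt0 ?normr_gt0.
exists ((1 - G y (wt t)) / (L * `|d|)); first by rewrite divr_gt0 ?subr_gt0.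
move=> h h_gt0; rewrite ltr_pdivlMr // => h_lt.
by apply: le_trans (segment_drift _ _ _ (ltW h_gt0)) _; lra.
Qed.

Lemma segment_step_boundary t y : G y (wt t) = 1 ->
  exists2 h0, 0 < h0 & forall h, 0 < h -> h < h0 ->
    exists y', G y' (wt (t + h)) <= 1 /\ `|y' - y| <= k * h.
Proof.
move=> G_eq1; set g := gradG y (wt t).
have c_le_g : c <= `|g| by apply: grad_ge.
have [|e e_gt0 descent] := descent_along_neg_gradient (c / 2) ip_inner (G_grad y (wt t)).
  by apply: lt_le_trans c_le_g; rewrite gtr_pMr ?invf_lt1 ?ltr1n.
exists (e / k) => [|h h_gt0]; first by rewrite divr_gt0.
rewrite ltr_pdivlMr // mulrC => kh_lt_e; have kh_gt0 : 0 < k * h by rewrite mulr_gt0.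
exists (y + (k * h) *: (- `|g|^-1 *: g)); split.
  apply: le_trans (segment_drift _ _ _ (ltW h_gt0)) _.
  have := descent _ kh_gt0 kh_lt_e; rewrite G_eq1.
  have -> : c / 2 * (k * h) = L * `|d| * h by rewrite /k; field; rewrite gt_eqF.
  lra.
have g_neq0 : `|g| != 0 by rewrite gt_eqF // (lt_le_trans c_gt0).
have v_unit : `|- `|g|^-1 *: g| = 1 by rewrite normrZ normrN normfV normr_id mulVf.
by rewrite addrAC subrr add0r normrZ v_unit mulr1 gtr0_norm.
Qed.

Lemma segment_left_closed t y :
  (forall e, 0 < e -> exists t' y',
     [/\ t - e < t', t' <= t, `|y - y'| < e & G y' (wt t') <= 1]) ->
  G y (wt t) <= 1.
Proof.
move=> approx; apply/ler_addgt0Pr => e e_gt0.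
have [a a_gt0 G_cont] := locally_lipschitz2_continuous G_loclip y (wt t) e e_gt0.
have d1_gt0 : 0 < `|d| + 1 by rewrite ltr_wpDl.
pose b := a / (`|d| + 1); have b_gt0 : 0 < b by rewrite divr_gt0.
have b_d1 : b * (`|d| + 1) = a by rewrite divfK ?gt_eqF.
have [t' [y' [tt' t't yy' Gy']]] := approx b b_gt0; clearbody b.
have b_le_a : b <= a by rewrite -b_d1 ler_peMr ?(ltW b_gt0) // lerDr.
have y'y : `|y' - y| < a by rewrite distrC; lra.
have wt't : `|wt t' - wt t| < a.
  rewrite /wt opprD addrACA subrr add0r -scalerBl normrZ distrC ger0_norm ?subr_ge0 //.
  nra.
have := G_cont y' (wt t') y'y wt't.
by move=> /(le_lt_trans (ler_norm _)); lra.
Qed.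

Lemma segment_transport z : G z w0 <= 1 ->
  exists2 y, G y (w0 + d) <= 1 & `|y - z| <= k.
Proof.
move=> Gz.
have [|||y [Gy yz]] := lip_continuation k (ltW k_gt0) (fun t y => G y (wt t) <= 1) _ _ z.
- exact: segment_left_closed.
- move=> t y _ _; have [/segment_step_interior[h0 h0_gt0 step]|G_ge1] := ltrP (G y (wt t)) 1.
    exists h0 => // h h_gt0 h_lt; exists y; split; first exact: step.
    by rewrite subrr normr0 mulr_ge0 // ltW.
  by move=> G_le1; apply: segment_step_boundary; apply/eqP; rewrite eq_le G_le1.
- by rewrite /wt scale0r addr0.
by exists y => //; move: Gy; rewrite /wt scale1r.
Qed.
End Segment.

Lemma sublevel_transport w1 w2 z : G z w1 <= 1 ->
  exists2 y, G y w2 <= 1 & `|z - y| <= 2 * L / c * `|w1 - w2|.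
Proof.
have [<- Gz|w12] := eqVneq w1 w2; first by exists z; rewrite // !subrr !normr0 mulr0.
have d_neq0 : w2 - w1 != 0 by rewrite subr_eq0 eq_sym.
move=> /(segment_transport _ _ d_neq0)[y Gy yz].
by exists y; [rewrite addrC subrK in Gy | rewrite distrC (distrC w1)].
Qed.
End SublevelTransport.

Lemma dist_le_norm {R : realType} {X : normedModType R} {S : set X} (x : X) {y : X} :
  S y -> (dist x S <= (`|x - y|)%:E)%E.
Proof. by move=> Sy; apply: ereal_inf_lbound; exists y. Qed.

Lemma hausdorff_dist_le {R : realType} {X : normedModType R} (A B : set X) (r : R) :
  (forall a, A a -> exists2 b, B b & `|a - b| <= r) ->
  (forall b, B b -> exists2 a, A a & `|b - a| <= r) ->
  (hausdorff_dist A B <= r%:E)%E.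
Proof.
move=> AB BA; rewrite /hausdorff_dist ge_max.
apply/andP; split; apply: ge_ereal_sup => _ [z Sz <-].
  by have [y By zy] := AB z Sz; apply: le_trans (dist_le_norm z By) _; rewrite lee_fin.
by have [y Ay zy] := BA z Sz; apply: le_trans (dist_le_norm z Ay) _; rewrite lee_fin.
Qed.

Theorem lemma2p2 (R : realType) (X W : completeNormedModType R)
  (ip : X -> X -> R) (G : X -> W -> R) (gradG : X -> W -> X)
  (lambda c L : R) (mu1 : W -> R -> R) (mu2 : R -> R) :
  is_inner_product ip ->
  (forall x w, 0 <= G x w) ->
  locally_lipschitz2 G ->
  (forall x w, is_partial_grad ip G x w (gradG x w)) ->
  0 < lambda -> 0 < c -> 0 < L ->
  (forall w s, 0 <= s -> 0 <= mu1 w s) ->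
  (forall s, 0 <= s -> 0 <= mu2 s) ->
  (forall w, mu1 w 0 = 0) -> mu2 0 = 0 ->
  (forall w, mu1 w s @[s --> +oo] --> +oo) ->
  mu2 s @[s --> +oo] --> +oo ->
  let Z := fun w : W => [set x : X | G x w <= 1] in
  (* (i) *)
  (forall x w, G x w = 1 -> c <= `|gradG x w|) ->
  (* (ii) *)
  (forall w x y, Z w x -> Z w y ->
     `|gradG x w - gradG y w| <= mu1 w `|x - y|) ->
  (* (iii) *)
  (forall w x z, boundary (Z w) x -> Z w z ->
     - lambda * `|x - z| ^+ 2 <= ip (gradG x w - gradG z w) (x - z)) ->
  (* (iv) *)
  (forall x w w', `|G x w - G x w'| <= L * `|w - w'|) ->
  (* (v) *)
  (forall (rho : R) x w, 0 < rho -> (rho%:E <= dist x (Z w))%E ->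
     mu2 rho <= G x w - 1) ->
  forall K : R, 0 < K -> exists CK : R, 0 < CK /\
    forall w1 w2 : W, Num.max `|w1| `|w2| <= K ->
      (hausdorff_dist (Z w1) (Z w2) <= (CK * `|w1 - w2|)%:E)%E.
Proof.
move=> ip_inner _ G_loclip G_grad _ c_gt0 L_gt0 _ _ _ _ _ _ Z grad_ge _ _ G_lipw _ K _.
have transport := sublevel_transport ip_inner G_loclip G_grad c_gt0 L_gt0 grad_ge G_lipw.
exists (2 * L / c); split=> [|w1 w2 _]; first by rewrite !mulr_gt0 ?invr_gt0.
apply: hausdorff_dist_le => z Zz; first exact: transport.
by rewrite distrC; apply: transport.
Qed.
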